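(* Let $\mathcal{H}$ be a complex Hilbert space, $A\in\mathcal{B}(\mathcal{H})$ positive and $S\in\mathcal{B}_A(\mathcal{H})$. Then for every positive integer $n$, $$d\omega_A^{4n}(S)\le 4^{n-1}\left\|\left(S^{\sharp_A}S\right)^n+\left(S^{\sharp_A}S\right)^{2n}\right\|_A\left\|\left(SS^{\sharp_A}\right)^n+\left(S^{\sharp_A}S\right)^{2n}\right\|_A .$$
   Context: $\mathcal{B}(\mathcal{H})$ denotes the bounded linear operators on $\mathcal{H}$. For positive $A$, $\langle x,z\rangle_A=\langle Ax,z\rangle$ and $\|z\|_A=\|A^{1/2}z\|$. $\mathcal{B}_A(\mathcal{H})$ is the set of $S\in\mathcal{B}(\mathcal{H})$ for which some $R\in\mathcal{B}(\mathcal{H})$ satisfies $AR=S^*A$; for such $S$, $S^{\sharp_A}=A^{\dagger}S^*A$ with $A^\dagger$ the Moore–Penrose inverse of $A$. For operators $T$ bounded with respect to $\|\cdot\|_A$: $\|T\|_A=\sup_{\|z\|_A=1}\|Tz\|_A$ and $d\omega_A(T)=\sup_{\|z\|_A=1}(|\langle Tz,z\rangle_A|^2+\|Tz\|_A^4)^{1/2}$. *)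

From HB Require Import structures.
From mathcomp Require Import all_boot all_order all_algebra.
From mathcomp Require Import complex.
From mathcomp Require Import boolp classical_sets reals.
Set Implicit Arguments. Unset Strict Implicit. Unset Printing Implicit Defensive.
Import Order.TTheory GRing.Theory Num.Theory.
Local Open Scope ring_scope.

Definition inner_product_axioms (R : realType) (H : lmodType R[i])
    (ip : H -> H -> R[i]) : Prop :=
  [/\ forall (a : R[i]) (x y z : H), ip (a *: x + y) z = a * ip x z + ip y z,
      forall x y : H, ip x y = conjc (ip y x),
      forall x : H, 0 <= ip x x
    & forall x : H, ip x x = 0 -> x = 0].

Definition hnorm (R : realType) (H : lmodType R[i]) (ip : H -> H -> R[i])
    (x : H) : R := Num.sqrt (complex.Re (ip x x)).

Definition hcomplete (R : realType) (H : lmodType R[i]) (ip : H -> H -> R[i])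
    : Prop :=
  forall u : nat -> H,
    (forall e : R, 0 < e -> exists N, forall m n, (N <= m)%N -> (N <= n)%N ->
        hnorm ip (u m - u n) < e) ->
    exists l : H, forall e : R, 0 < e -> exists N, forall n, (N <= n)%N ->
        hnorm ip (u n - l) < e.

Definition is_hilbert (R : realType) (H : lmodType R[i]) (ip : H -> H -> R[i])
    : Prop := inner_product_axioms ip /\ hcomplete ip.

Definition bounded_op (R : realType) (H : lmodType R[i]) (ip : H -> H -> R[i])
    (T : H -> H) : Prop :=
  (forall (a : R[i]) (x y : H), T (a *: x + y) = a *: T x + T y) /\
  exists M : R, forall x, hnorm ip (T x) <= M * hnorm ip x.

(* positive operator: <A x, x> >= 0 (in the partial order of R[i]) *)
Definition positive_op (R : realType) (H : lmodType R[i]) (ip : H -> H -> R[i])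
    (A : H -> H) : Prop :=
  bounded_op ip A /\ forall x, 0 <= ip (A x) x.

Definition is_adjoint (R : realType) (H : lmodType R[i]) (ip : H -> H -> R[i])
    (T Ts : H -> H) : Prop :=
  forall x y, ip (T x) y = ip x (Ts y).

Definition in_BA (R : realType) (H : lmodType R[i]) (ip : H -> H -> R[i])
    (A S Sstar : H -> H) : Prop :=
  bounded_op ip S /\ exists T, bounded_op ip T /\ forall x, A (T x) = Sstar (A x).

(* Moore-Penrose inverse on the range of A: for b in R(A), A^dagger b is the
   unique y in N(A)^perp with A y = b.  mp_graph A b y  <->  A^dagger b = y. *)
Definition mp_graph (R : realType) (H : lmodType R[i]) (ip : H -> H -> R[i])
    (A : H -> H) (b y : H) : Prop :=
  (exists u, A u = b) /\ A y = b /\ (forall z, A z = 0 -> ip y z = 0).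

Definition is_Asharp (R : realType) (H : lmodType R[i]) (ip : H -> H -> R[i])
    (A Sstar Ssharp : H -> H) : Prop :=
  forall x, mp_graph ip A (Sstar (A x)) (Ssharp x).

(* A-seminorm ||z||_A = ||A^{1/2} z|| = sqrt <A z, z> *)
Definition normA (R : realType) (H : lmodType R[i]) (ip : H -> H -> R[i])
    (A : H -> H) (z : H) : R := Num.sqrt (complex.Re (ip (A z) z)).

Definition opnormA (R : realType) (H : lmodType R[i]) (ip : H -> H -> R[i])
    (A T : H -> H) : R :=
  sup [set r : R | exists z, normA ip A z = 1 /\ r = normA ip A (T z)].

Definition domegaA (R : realType) (H : lmodType R[i]) (ip : H -> H -> R[i])
    (A T : H -> H) : R :=
  sup [set r : R | exists z, normA ip A z = 1 /\
        r = Num.sqrt (Normc.normc (ip (A (T z)) z) ^+ 2 + normA ip A (T z) ^+ 4)].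

Definition opadd (R : realType) (H : lmodType R[i]) (T U : H -> H) : H -> H :=
  fun x => T x + U x.
Definition opexp (R : realType) (H : lmodType R[i]) (T : H -> H) (n : nat)
    : H -> H := iter n T.

From HB Require Import structures.
From mathcomp Require Import all_boot all_order all_algebra.
From mathcomp Require Import complex.
From mathcomp Require Import boolp classical_sets reals.
From mathcomp Require Import ring lra.
Set Implicit Arguments. Unset Strict Implicit. Unset Printing Implicit Defensive.
Import Order.TTheory GRing.Theory Num.Theory.
Local Open Scope ring_scope.
Local Notation Re := complex.Re.
Local Notation Im := complex.Im.

(* For an A-unit vector z put a = ||Sz||_A^2 = <S^# S z, z>_A, b = ||S^# z||_A^2
   = <S S^# z, z>_A and m = |<Sz, z>_A|^2.  Cauchy-Schwarz gives m <= a and m <= b,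
   hence (m + a^2)^2 <= (a + a^2)(b + a^2).  Convexity of t |-> t^n splits
   (a + a^2)^n, and the Hoelder-McCarthy inequality <Pz, z>^k <= <P^k z, z>_A for
   the A-positive operators P = S^# S and S S^# bounds each power by an A-inner
   product, hence by an A-operator norm.  That last step needs S and S^# to be
   A-bounded; for S this comes from Hoelder-McCarthy applied to the A-positive
   operator T S, where A T = S^* A, letting the exponent grow. *)

Section ComplexParts.
Variable R : rcfType.
Implicit Types x y : R[i].

Lemma ReD x y : Re (x + y) = Re x + Re y. Proof. by case: x; case: y. Qed.
Lemma ImD x y : Im (x + y) = Im x + Im y. Proof. by case: x; case: y. Qed.
Lemma ReM x y : Re (x * y) = Re x * Re y - Im x * Im y.
Proof. by case: x; case: y. Qed.
Lemma ImM x y : Im (x * y) = Re x * Im y + Im x * Re y.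
Proof. by case: x => a b; case: y => c d /=; rewrite addrC. Qed.
Lemma ReJ x : Re (conjc x) = Re x. Proof. by case: x. Qed.
Lemma ImJ x : Im (conjc x) = - Im x. Proof. by case: x. Qed.

Lemma complex_ReIm_inj x y : Re x = Re y -> Im x = Im y -> x = y.
Proof. by case: x => a b; case: y => c d /= -> ->. Qed.

Lemma normc_sqr x : Normc.normc x ^+ 2 = Re x ^+ 2 + Im x ^+ 2.
Proof. by case: x => a b /=; rewrite sqr_sqrtr // addr_ge0 // sqr_ge0. Qed.

End ComplexParts.

Ltac simpReIm := rewrite ?(ReD, ImD, ReM, ImM, ReJ, ImJ) /=.

Lemma quadratic_discriminant_le (R : realFieldType) (a b c : R) : 0 <= c ->
  (forall t, 0 <= a + 2 * t * b + t ^+ 2 * c) -> b ^+ 2 <= a * c.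
Proof.
move=> c_ge0 quad_ge0; have := quad_ge0 0.
rewrite !(mul0r, mulr0, expr0n) /= !addr0 => a_ge0.
have [c0|c_neq0] := eqVneq c 0.
  subst c; rewrite mulr0; have [->|b_neq0] := eqVneq b 0; first by rewrite expr0n.
  have := quad_ge0 (- (a + 1) / (2 * b)).
  have -> : 2 * (- (a + 1) / (2 * b)) * b = - (a + 1) by field; rewrite b_neq0.
  rewrite mulr0; lra.
have c_gt0 : 0 < c by rewrite lt_def c_neq0 c_ge0.
have := quad_ge0 (- b / c).
have -> : a + 2 * (- b / c) * b + (- b / c) ^+ 2 * c = (a * c - b ^+ 2) / c.
  by field.
rewrite pmulr_lge0 ?invr_gt0 //; lra.
Qed.

Lemma ler_of_sqr_le_scale (R : realFieldType) (x y k : R) : 0 <= y -> 0 <= k ->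
  x ^+ 2 <= k * y ^+ 2 -> x <= (1 + k) * y.
Proof.
move=> y_ge0 k_ge0 x2_le; apply: (le_trans (ler_norm x)).
rewrite -(@ler_pXn2r _ 2) ?nnegrE ?mulr_ge0 ?addr_ge0 // real_normK ?num_real //.
by rewrite (le_trans x2_le) // exprMn ler_wpM2r ?sqr_ge0 //; nra.
Qed.

Lemma bernoulli_ineq (R : realFieldType) (r : R) n :
  1 <= r -> 1 + n%:R * (r - 1) <= r ^+ n.
Proof.
move=> r_ge1; elim: n => [|n IH]; first by rewrite mul0r addr0 expr0.
rewrite exprS -natr1.
have n_ge0 : 0 <= n%:R :> R by apply: ler0n.
have : r * (1 + n%:R * (r - 1)) <= r * r ^+ n by apply: ler_wpM2l => //; lra.
have : 0 <= n%:R * ((r - 1) * (r - 1)) by apply: mulr_ge0 => //; nra.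
nra.
Qed.

Lemma ler_of_exprn_bounded (R : archiRealFieldType) (a b C : R) :
  0 <= a -> 0 < b -> (forall j, a ^+ j.+1 <= b ^+ j.+1 * C) -> a <= b.
Proof.
move=> a_ge0 b_gt0 expC; rewrite leNgt; apply/negP => b_lt_a.
set r := a / b.
have r_gt1 : 1 < r by rewrite /r ltr_pdivlMr // mul1r.
have aE : a = r * b by rewrite /r divfK ?lt0r_neq0.
have rC j : r ^+ j.+1 <= C.
  by have := expC j; rewrite aE exprMn mulrC ler_pM2l ?exprn_gt0.
have C_ge0 : 0 <= C by have := rC 0%N; rewrite expr1; lra.
set n := Num.bound (C / (r - 1)).
have : C < n%:R * (r - 1).
  by rewrite -ltr_pdivrMr ?subr_gt0 // archi_boundP // divr_ge0 // subr_ge0 ltW.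
have := bernoulli_ineq n.+1 (ltW r_gt1); have := rC n.
have : n%:R * (r - 1) <= n.+1%:R * (r - 1) by rewrite ler_wpM2r ?ler_nat //; lra.
lra.
Qed.

Lemma exprD_le_convex (R : realFieldType) (x y : R) n : 0 <= x -> 0 <= y ->
  (x + y) ^+ n.+1 <= 2 ^+ n * (x ^+ n.+1 + y ^+ n.+1).
Proof.
move=> x_ge0 y_ge0; elim: n => [|n IH]; first by rewrite expr0 mul1r !expr1.
rewrite [(x + y) ^+ _]exprS.
apply: (le_trans (ler_wpM2l (addr_ge0 x_ge0 y_ge0) IH)).
set X := x ^+ n.+1; set Y := y ^+ n.+1.
have chebyshev : 0 <= (x - y) * (X - Y).
  have [xy|yx] := leP x y.
    have : X <= Y by rewrite ler_pXn2r ?nnegrE.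
    nra.
  have : Y <= X by rewrite ler_pXn2r ?nnegrE // ltW.
  nra.
rewrite [x ^+ n.+2]exprS [y ^+ n.+2]exprS -/X -/Y exprS.
have := mulr_ge0 (exprn_ge0 n (ler0n R 2)) chebyshev; nra.
Qed.

(* The scalar core of the theorem, for m = |<Sz, z>_A|^2, a = ||Sz||_A^2 and
   b = ||S^# z||_A^2. *)
Lemma domega_scalar_ineq (R : realFieldType) n (m a b X Y : R) :
  0 <= m -> m <= a -> m <= b ->
  a ^+ n.+1 + a ^+ (2 * n.+1) <= X -> b ^+ n.+1 + a ^+ (2 * n.+1) <= Y ->
  ((m + a ^+ 2) ^+ 2) ^+ n.+1 <= 4%:R ^+ n * (X * Y).
Proof.
move=> m_ge0 ma mb aX bY.
have a_ge0 : 0 <= a by lra.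
have b_ge0 : 0 <= b by lra.
have a2_ge0 := sqr_ge0 a.
have key : (m + a ^+ 2) ^+ 2 <= (a + a ^+ 2) * (b + a ^+ 2).
  have : m * m <= a * b by apply: ler_pM.
  rewrite !expr2 in a2_ge0 *; nra.
have two_n_ge0 : 0 <= 2 ^+ n :> R by apply: exprn_ge0.
have split_a : (a + a ^+ 2) ^+ n.+1 <= 2 ^+ n * X.
  by rewrite (le_trans (exprD_le_convex n a_ge0 a2_ge0)) // -exprM ler_wpM2l.
have split_b : (b + a ^+ 2) ^+ n.+1 <= 2 ^+ n * Y.
  by rewrite (le_trans (exprD_le_convex n b_ge0 a2_ge0)) // -exprM ler_wpM2l.
rewrite (_ : 4%:R ^+ n = 2 ^+ n * 2 ^+ n); last by rewrite -exprMn -natrM.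
rewrite mulrACA; apply: (le_trans (lerXn2r n.+1 _ _ key)); rewrite ?nnegrE.
- exact: sqr_ge0.
- by rewrite mulr_ge0 ?addr_ge0.
- by rewrite exprMn ler_pM ?exprn_ge0 ?addr_ge0.
Qed.

Lemma sup_ge0 (R : realType) (E : set R) :
  (forall r, E r -> 0 <= r) -> 0 <= sup E.
Proof.
move=> E_ge0; have [[[r Er] E_ub]|no_sup] := pselect (has_sup E).
  exact: le_trans (E_ge0 r Er) (ub_le_sup E_ub Er).
by rewrite sup_out.
Qed.

Lemma exists_nthroot (R : rcfType) (N : nat) (K : R) : (0 < N)%N -> 0 <= K ->
  exists2 u, 0 <= u & u ^+ N = K.
Proof.
move=> N_gt0 K_ge0.
have [||u /andP[u_ge0 _]] := @poly_ivt R ('X^N - K%:P) 0 (K + 1).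
- by rewrite addr_ge0.
- rewrite !hornerE expr0n eqn0Ngt N_gt0 sub0r oppr_le0 K_ge0 /= subr_ge0.
  by rewrite (le_trans _ (ler_eXnr N_gt0 _)) ?lerDl // lerDr.
- by rewrite rootE !hornerE subr_eq0 => /eqP; exists u.
Qed.

Lemma sup_exprn_le (R : realType) (E : set R) (N : nat) (K : R) : (0 < N)%N ->
  0 <= K -> (forall r, E r -> 0 <= r /\ r ^+ N <= K) -> sup E ^+ N <= K.
Proof.
move=> N_gt0 K_ge0 EK; have [u u_ge0 uK] := exists_nthroot N_gt0 K_ge0.
have [[r Er]|E0] := pselect (E !=set0)%classic; last first.
  rewrite sup_out; first by rewrite expr0n gtn_eqF.
  by case.
have sup_ge0E : 0 <= sup E by apply: sup_ge0 => s /EK[].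
rewrite -uK lerXn2r ?nnegrE //; apply: ge_sup; first by exists r.
by move=> s /EK[s_ge0 sK]; rewrite -(ler_pXn2r N_gt0) ?nnegrE ?uK.
Qed.

Section SesquilinearForm.
Variables (R : rcfType) (H : lmodType R[i]).

Definition sesquilinear (g : H -> H -> R[i]) :=
  (forall a x y z, g (a *: x + y) z = a * g x z + g y z) /\
  (forall a x y z, g x (a *: y + z) = conjc a * g x y + g x z).

Definition qform (g : H -> H -> R[i]) x := Re (g x x).

Definition form_bounded (g : H -> H -> R[i]) (W : H -> H) :=
  exists2 D : R, 0 < D & forall y, qform g (W y) <= D * qform g y.

Lemma linear_iter (U : H -> H) n : linear U -> linear (iter n U).
Proof. by move=> U_lin; elim: n => [//|n IH] a x y /=; rewrite IH U_lin. Qed.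

Lemma linear_comp (U V : H -> H) : linear U -> linear V -> linear (U \o V).
Proof. by move=> U_lin V_lin a x y /=; rewrite V_lin U_lin. Qed.

Variable g : H -> H -> R[i].
Hypothesis g_sesq : sesquilinear g.

Lemma form0l z : g 0 z = 0.
Proof.
have := g_sesq.1 1 0 0 z; rewrite scale1r addr0 mul1r => g0.
by apply: (addrI (g 0 z)); rewrite addr0 -g0.
Qed.

Lemma form0r z : g z 0 = 0.
Proof.
have := g_sesq.2 1 z 0 0; rewrite scale1r addr0 rmorph1 mul1r => g0.
by apply: (addrI (g z 0)); rewrite addr0 -g0.
Qed.

Lemma formDl x y z : g (x + y) z = g x z + g y z.
Proof. by rewrite -{1}[x]scale1r g_sesq.1 mul1r. Qed.

Lemma formDr x y z : g z (x + y) = g z x + g z y.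
Proof. by rewrite -{1}[x]scale1r g_sesq.2 rmorph1 mul1r. Qed.

Lemma formZl a x z : g (a *: x) z = a * g x z.
Proof. by rewrite -[a *: x]addr0 g_sesq.1 form0l addr0. Qed.

Lemma formZr a x z : g z (a *: x) = conjc a * g z x.
Proof. by rewrite -[a *: x]addr0 g_sesq.2 form0r addr0. Qed.

Lemma formBl x y z : g (x - y) z = g x z - g y z.
Proof. by rewrite formDl -scaleN1r formZl mulN1r. Qed.

Lemma formBr x y z : g z (x - y) = g z x - g z y.
Proof. by rewrite formDr -scaleN1r formZr rmorphN1 mulN1r. Qed.

Lemma form_expand c u v x y : g (u + c *: v) (x + c *: y) =
  g u x + conjc c * g u y + c * g v x + c * conjc c * g v y.
Proof. by rewrite !(formDl, formDr, formZl, formZr); ring. Qed.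

Hypothesis g_ge0 : forall x, 0 <= g x x.

Lemma Im_form_diag x : Im (g x x) = 0.
Proof. exact: ger0_Im. Qed.

Lemma qform_ge0 x : 0 <= qform g x.
Proof. by have := g_ge0 x; rewrite lecE => /andP[]. Qed.

(* Polarization: Im g(w, w) = 0 for w = x + y and w = x + i y forces hermitian
   symmetry. *)
Lemma formC x y : g y x = conjc (g x y).
Proof.
have := Im_form_diag (x + 1 *: y); have := Im_form_diag (x + 'i%C *: y).
rewrite !form_expand rmorph1 !mul1r; simpReIm; rewrite !Im_form_diag => hi h1.
by apply: complex_ReIm_inj; simpReIm; lra.
Qed.

Lemma Re_formC x y : Re (g y x) = Re (g x y).
Proof. by rewrite formC ReJ. Qed.

Lemma qform_addZ x y (t : R) :
  qform g (x + t%:C%C *: y) = qform g x + 2 * t * Re (g x y) + t ^+ 2 * qform g y.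
Proof. by rewrite /qform form_expand; simpReIm; rewrite Re_formC; lra. Qed.

Lemma cauchy_schwarz_Re x y : Re (g x y) ^+ 2 <= qform g x * qform g y.
Proof.
apply: quadratic_discriminant_le; first exact: qform_ge0.
by move=> t; rewrite -qform_addZ qform_ge0.
Qed.

Lemma cauchy_schwarz x y : Normc.normc (g x y) ^+ 2 <= qform g x * qform g y.
Proof.
have := cauchy_schwarz_Re x (g x y *: y).
rewrite formZr /qform formZl formZr normc_sqr; simpReIm; rewrite Im_form_diag.
set r := Re (g x y); set i := Im (g x y); set q := Re (g y y).
have -> : (r * r - - i * i) ^+ 2 = (r ^+ 2 + i ^+ 2) * (r ^+ 2 + i ^+ 2) by ring.
have -> : r * (r * q - - i * 0) - i * (r * 0 + - i * q) = (r ^+ 2 + i ^+ 2) * q.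
  by ring.
have m_ge0 : 0 <= r ^+ 2 + i ^+ 2 by rewrite addr_ge0 ?sqr_ge0.
have [->|m_neq0] := eqVneq (r ^+ 2 + i ^+ 2) 0.
  by move=> _; apply: mulr_ge0; apply: qform_ge0.
by rewrite mulrCA ler_pM2l // lt_def m_neq0.
Qed.

Lemma Re_form_le x y : Re (g x y) <= Num.sqrt (qform g x) * Num.sqrt (qform g y).
Proof.
have := cauchy_schwarz_Re x y.
have := sqr_sqrtr (qform_ge0 x); have := sqr_sqrtr (qform_ge0 y).
have := sqrtr_ge0 (qform g x); have := sqrtr_ge0 (qform g y).
set u := Num.sqrt (qform g x); set v := Num.sqrt (qform g y).
move=> v_ge0 u_ge0 <- <-; rewrite -exprMn => le_Re.
have := mulr_ge0 u_ge0 v_ge0; nra.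
Qed.

Lemma qformD_le x y : qform g (x + y) <= 2 * (qform g x + qform g y).
Proof.
have := qform_addZ x y 1; rewrite scale1r expr1n mul1r mulr1 => ->.
have := cauchy_schwarz_Re x y; have := qform_ge0 x; have := qform_ge0 y.
set p := qform g x; set q := qform g y; set r := Re (g x y) => q_ge0 p_ge0 le_r.
have : 0 <= (p - q) ^+ 2 by apply: sqr_ge0.
rewrite !expr2 in le_r *; nra.
Qed.

Lemma qform_iter_le U (D : R) : 0 <= D ->
  (forall y, qform g (U y) <= D * qform g y) ->
  forall k y, qform g (iter k U y) <= D ^+ k * qform g y.
Proof.
move=> D_ge0 UD; elim=> [|k IH] y; first by rewrite expr0 mul1r.
by rewrite iterS (le_trans (UD _)) // exprS -mulrA ler_wpM2l.
Qed.

Lemma form_bounded_iter U k : form_bounded g U -> form_bounded g (iter k U).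
Proof.
move=> [D D_gt0 UD]; exists (D ^+ k); first exact: exprn_gt0.
exact: qform_iter_le (ltW D_gt0) UD k.
Qed.

Lemma form_bounded_comp U V :
  form_bounded g U -> form_bounded g V -> form_bounded g (U \o V).
Proof.
move=> [D D_gt0 UD] [E E_gt0 VE]; exists (D * E); first exact: mulr_gt0.
by move=> y; rewrite (le_trans (UD _)) // -mulrA ler_wpM2l // ltW.
Qed.

Lemma form_bounded_add U V :
  form_bounded g U -> form_bounded g V -> form_bounded g (fun y => U y + V y).
Proof.
move=> [D D_gt0 UD] [E E_gt0 VE]; exists (2 * (D + E)).
  by rewrite mulr_gt0 ?addr_gt0.
move=> y; apply: (le_trans (qformD_le _ _)).
have := UD y; have := VE y; have := qform_ge0 y; nra.
Qed.

Section HolderMcCarthy.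
Variable U : H -> H.
Hypotheses (U_lin : linear U) (U_sym : forall x y, g (U x) y = g x (U y))
  (U_ge0 : forall x, 0 <= Re (g (U x) x)).

Lemma form_iter_shift x a b :
  g (iter a U x) (iter b U x) = g (iter (a + b) U x) x.
Proof.
elim: b a => [|b IH] a; first by rewrite addn0.
by rewrite iterS -U_sym -iterS IH addSnnS.
Qed.

(* Write j = r + 2k with r in {0, 1}: the quadratic is Re g(U^r w, w) for
   w = U^k x + t U^(k+1) x. *)
Lemma form_iter_quadratic_ge0 x j (t : R) :
  0 <= Re (g (iter j U x) x) + 2 * t * Re (g (iter j.+1 U x) x)
       + t ^+ 2 * Re (g (iter j.+2 U x) x).
Proof.
have [r [k [r01 ->]]] : exists r k, (r <= 1)%N /\ j = (r + k.*2)%N.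
  by exists (odd j), j./2; rewrite odd_double_half leq_b1.
have : 0 <= Re (g (iter r U (iter k U x + t%:C%C *: iter k.+1 U x))
                  (iter k U x + t%:C%C *: iter k.+1 U x)).
  by case: r r01 => [|[|//]] _; [apply: qform_ge0 | apply: U_ge0].
rewrite {1}[iter k U x + _]addrC linear_iter // addrC -!iterD form_expand.
rewrite !form_iter_shift !(addnS, addSn) -!addnA addnn; simpReIm.
rewrite !(mul0r, mulr0, oppr0, subr0, addr0) expr2; lra.
Qed.

Lemma form_iter_ge0 x j : 0 <= Re (g (iter j U x) x).
Proof.
by have := form_iter_quadratic_ge0 x j 0; rewrite !(mul0r, mulr0, expr0n) !addr0.
Qed.

Lemma form_iter_log_convex x j :
  Re (g (iter j.+1 U x) x) ^+ 2
    <= Re (g (iter j U x) x) * Re (g (iter j.+2 U x) x).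
Proof.
apply: quadratic_discriminant_le; first exact: form_iter_ge0.
exact: form_iter_quadratic_ge0.
Qed.

Lemma form_iter_ratio_le x j :
  Re (g (U x) x) * Re (g (iter j U x) x)
    <= qform g x * Re (g (iter j.+1 U x) x).
Proof.
set c := fun m => Re (g (iter m U x) x).
rewrite -[Re (g (U x) x)]/(c 1%N) -[qform g x]/(c 0%N) -/(c j) -/(c j.+1).
have c_ge0 m : 0 <= c m := form_iter_ge0 x m.
elim: j => [|j IH]; first by rewrite mulrC.
have convex := form_iter_log_convex x j.
rewrite -/(c j) -/(c j.+1) -/(c j.+2) in convex.
have [cj0|cj_neq0] := eqVneq (c j) 0.
  have -> : c j.+1 = 0 by move: convex; rewrite cj0 mul0r expr2; nra.
  by rewrite mulr0 mulr_ge0.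
have cj_gt0 : 0 < c j by rewrite lt_def cj_neq0 c_ge0.
rewrite -(ler_pM2l cj_gt0) mulrCA mulrA.
rewrite (le_trans (ler_wpM2r (c_ge0 j.+1) IH)) // -mulrA -expr2.
by rewrite [c j * _]mulrCA ler_wpM2l.
Qed.

Lemma holder_mccarthy x j :
  Re (g (U x) x) ^+ j.+1 <= qform g x ^+ j * Re (g (iter j.+1 U x) x).
Proof.
elim: j => [|j IH]; first by rewrite expr1 expr0 mul1r.
rewrite exprS (le_trans (ler_wpM2l (U_ge0 x) IH)) //.
rewrite mulrCA (exprSr (qform g x)) -[qform g x ^+ j * _ * _]mulrA.
by rewrite ler_wpM2l ?exprn_ge0 ?qform_ge0 ?form_iter_ratio_le.
Qed.

End HolderMcCarthy.

End SesquilinearForm.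

Section IterateGrowth.
Variables (R : archiRcfType) (H : lmodType R[i]) (g : H -> H -> R[i]) (U : H -> H).
Hypotheses (g_sesq : sesquilinear g) (g_ge0 : forall x, 0 <= g x x).
Hypotheses (U_lin : linear U) (U_sym : forall x y, g (U x) y = g x (U y))
  (U_ge0 : forall x, 0 <= Re (g (U x) x)).

(* Hoelder-McCarthy and Cauchy-Schwarz give (s^2)^(j+1) <= (K t^2)^(j+1) (C / t)
   for s = Re g(Ux, x) and t = qform g x; then let j grow. *)
Lemma form_sqr_le_of_iter_bound x (K C : R) : 0 < K ->
  (forall k, qform g (iter k U x) <= K ^+ k * C) ->
  Re (g (U x) x) ^+ 2 <= K * qform g x ^+ 2.
Proof.
move=> K_gt0 iterKC.
set s := Re (g (U x) x); set t := qform g x.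
have t_ge0 : 0 <= t := qform_ge0 g_ge0 x.
have s_ge0 : 0 <= s := U_ge0 x.
have step j : (s ^+ 2) ^+ j.+1 <= (t ^+ j) ^+ 2 * (t * (K ^+ j.+1 * C)).
  have c_ge0 := form_iter_ge0 g_sesq g_ge0 U_lin U_sym U_ge0 x j.+1.
  have := holder_mccarthy g_sesq g_ge0 U_lin U_sym U_ge0 x j.
  have := cauchy_schwarz_Re g_sesq g_ge0 (iter j.+1 U x) x.
  have := iterKC j.+1.
  set c := Re (g (iter j.+1 U x) x); set q := qform g (iter j.+1 U x).
  rewrite -/s -/t => qKC cs hm; rewrite -exprM mulnC exprM.
  apply: (@le_trans _ _ ((t ^+ j * c) ^+ 2)).
    by rewrite ler_pXn2r // nnegrE ?exprn_ge0 // mulr_ge0 ?exprn_ge0.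
  by rewrite exprMn ler_wpM2l ?sqr_ge0 // (le_trans cs) // mulrC ler_wpM2l.
have [t0|t_neq0] := eqVneq t 0.
  by have := step 0%N; rewrite t0 !(expr0n, mul0r, mulr0) expr1.
have t_gt0 : 0 < t by rewrite lt_def t_neq0 t_ge0.
apply: (@ler_of_exprn_bounded _ _ _ (C / t)); first exact: sqr_ge0.
  by rewrite mulr_gt0 ?exprn_gt0.
move=> j; suff -> : (K * t ^+ 2) ^+ j.+1 * (C / t)
                   = (t ^+ j) ^+ 2 * (t * (K ^+ j.+1 * C)) by exact: step.
rewrite exprMn -!exprM (_ : (2 * j.+1 = (j * 2).+2)%N); last by rewrite mulnC.
by rewrite !exprS; field.
Qed.

End IterateGrowth.

Section ASeminorm.
Variables (R : realType) (H : lmodType R[i]) (ip : H -> H -> R[i]) (A : H -> H).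
Hypotheses (ip_ax : inner_product_axioms ip) (A_pos : positive_op ip A).

Definition ipA x y := ip (A x) y.

Lemma ip_ge0 x : 0 <= ip x x. Proof. by case: ip_ax. Qed.

Lemma ipC x y : ip x y = conjc (ip y x). Proof. by case: ip_ax. Qed.

Lemma ip_sesq : sesquilinear ip.
Proof.
case: ip_ax => ipDl _ _ _; split=> // a x y z.
rewrite ipC ipDl [ip x y]ipC [ip x z]ipC.
by apply: complex_ReIm_inj; simpReIm; lra.
Qed.

Lemma ip_inj_r w1 w2 : (forall u, ip u w1 = ip u w2) -> w1 = w2.
Proof.
move=> eq_ip; apply/eqP; rewrite -subr_eq0; apply/eqP.
case: ip_ax => _ _ _; apply.
by rewrite (formBr ip_sesq) eq_ip subrr.
Qed.

Lemma bounded_op_form_bounded T : bounded_op ip T -> form_bounded ip T.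
Proof.
move=> [_ [M TM]]; exists ((`|M| + 1) ^+ 2); first by rewrite exprn_gt0 // ltr_wpDl.
move=> x; have := TM x; rewrite /hnorm.
have := sqrtr_ge0 (qform ip x); have := sqrtr_ge0 (qform ip (T x)).
have := sqr_sqrtr (qform_ge0 ip_ge0 x); have := sqr_sqrtr (qform_ge0 ip_ge0 (T x)).
rewrite /qform; set u := Num.sqrt (Re (ip (T x) (T x))).
set v := Num.sqrt (Re (ip x x)) => <- <- u_ge0 v_ge0 uMv.
have : u <= (`|M| + 1) * v by have := ler_norm M; nra.
by rewrite -exprMn -(ler_pXn2r (_ : (0 < 2)%N)) // nnegrE mulr_ge0 ?addr_ge0.
Qed.

Lemma ipA_sesq : sesquilinear ipA.
Proof.
case: ip_sesq => ipDl ipDr; case: A_pos => [[A_lin _] _].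
by split=> a x y z; rewrite /ipA ?A_lin ?ipDl ?ipDr.
Qed.

Lemma ipA_ge0 x : 0 <= ipA x x. Proof. by case: A_pos => _; apply. Qed.

Lemma A_selfadjoint u v : ip (A u) v = ip u (A v).
Proof.
rewrite -[ip (A u) v]/(ipA u v) (formC ipA_sesq ipA_ge0) /ipA.
by rewrite [ip (A v) u]ipC conjcK.
Qed.

Lemma qformA_le : exists2 M, 0 < M & forall y, qform ipA y <= M * qform ip y.
Proof.
case: A_pos => A_bnd _; have [D D_gt0 AD] := bounded_op_form_bounded A_bnd.
exists (1 + D); first by rewrite addr_gt0.
move=> y; apply: ler_of_sqr_le_scale; [exact: (qform_ge0 ip_ge0) | exact: ltW |].
apply: (le_trans (cauchy_schwarz_Re ip_sesq ip_ge0 (A y) y)).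
by rewrite expr2 mulrA ler_wpM2r ?(qform_ge0 ip_ge0).
Qed.

Lemma qformA_unit z : normA ip A z = 1 -> qform ipA z = 1.
Proof.
move=> z1; rewrite -(sqr_sqrtr (qform_ge0 ipA_ge0 z)).
by rewrite [Num.sqrt _]z1 expr1n.
Qed.

Lemma opnormA_ge0 W : 0 <= opnormA ip A W.
Proof. by apply: sup_ge0 => _ [z [_ ->]]; exact: sqrtr_ge0. Qed.

Lemma Re_ipA_le_opnormA W z : form_bounded ipA W -> normA ip A z = 1 ->
  Re (ipA (W z) z) <= opnormA ip A W.
Proof.
move=> [D D_gt0 WD] z1.
apply: (le_trans (Re_form_le ipA_sesq ipA_ge0 _ _)).
rewrite (qformA_unit z1) sqrtr1 mulr1.
apply: ub_le_sup; last by exists z.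
exists (1 + D) => _ [y [y1 ->]].
have := WD y; rewrite (qformA_unit y1) mulr1.
have := sqr_sqrtr (qform_ge0 ipA_ge0 (W y)); have := sqrtr_ge0 (qform ipA (W y)).
change (normA ip A (W y)) with (Num.sqrt (qform ipA (W y))).
set v := Num.sqrt _; nra.
Qed.

Lemma Re_ipA_add_le_opnormA W1 W2 z :
  form_bounded ipA W1 -> form_bounded ipA W2 -> normA ip A z = 1 ->
  Re (ipA (W1 z) z) + Re (ipA (W2 z) z) <= opnormA ip A (opadd W1 W2).
Proof.
move=> W1_bnd W2_bnd z1; rewrite -ReD -(formDl ipA_sesq).
exact: Re_ipA_le_opnormA (form_bounded_add ipA_sesq ipA_ge0 W1_bnd W2_bnd) z1.
Qed.

Variables (S Sstar Ssharp : H -> H).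
Hypotheses (S_adj : is_adjoint ip S Sstar) (S_BA : in_BA ip A S Sstar)
  (S_sharp : is_Asharp ip A Sstar Ssharp).

Lemma A_linear : linear A. Proof. by case: A_pos => [[]]. Qed.

Lemma S_linear : linear S. Proof. by case: S_BA => [[]]. Qed.

Lemma Sstar_linear : linear Sstar.
Proof.
move=> a y z; apply: ip_inj_r => u.
by rewrite -S_adj ip_sesq.2 !S_adj -ip_sesq.2.
Qed.

Lemma Ssharp_linear : linear Ssharp.
Proof.
move=> a x x'; set y := Ssharp (a *: x + x'); set y' := a *: Ssharp x + Ssharp x'.
have [_ [Ay y_perp]] := S_sharp (a *: x + x').
have [_ [Ax x_perp]] := S_sharp x; have [_ [Ax' x'_perp]] := S_sharp x'.
have A_yy' : A (y - y') = 0.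
  rewrite -scaleN1r addrC A_linear scaleN1r Ay A_linear Sstar_linear /y'.
  by rewrite A_linear Ax Ax' addNr.
apply/eqP; rewrite -subr_eq0; apply/eqP; case: ip_ax => _ _ _; apply.
by rewrite (formBl ip_sesq) y_perp // ip_sesq.1 x_perp // x'_perp // mulr0 addr0 subrr.
Qed.

Lemma ipA_S_Ssharp x y : ipA (S x) y = ipA x (Ssharp y).
Proof.
have [_ [ASs _]] := S_sharp y.
by rewrite /ipA A_selfadjoint S_adj -ASs -A_selfadjoint.
Qed.

Lemma ipA_Ssharp_S x y : ipA (Ssharp x) y = ipA x (S y).
Proof.
by rewrite (formC ipA_sesq ipA_ge0) -ipA_S_Ssharp -(formC ipA_sesq ipA_ge0).
Qed.

(* With A T = S^* A, the operator T S is A-symmetric and A-positive, and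
   Re <T S x, x>_A = ||S x||_A^2. *)
Lemma S_Abounded : form_bounded ipA S.
Proof.
case: S_BA => S_bnd [T [T_bnd AT]]; pose B := T \o S.
have B_S u v : ipA (B u) v = ipA (S u) (S v).
  by rewrite /ipA /B /= AT ipC -S_adj -ipC.
have B_lin : linear B := linear_comp T_bnd.1 S_bnd.1.
have B_sym u v : ipA (B u) v = ipA u (B v).
  by rewrite B_S (formC ipA_sesq ipA_ge0) -B_S -(formC ipA_sesq ipA_ge0).
have B_ge0 u : 0 <= Re (ipA (B u) u) by rewrite B_S; apply: (qform_ge0 ipA_ge0).
have [K K_gt0 BK] := form_bounded_comp (bounded_op_form_bounded T_bnd)
  (bounded_op_form_bounded S_bnd).
have [M M_gt0 AM] := qformA_le.
exists (1 + K); first by rewrite addr_gt0.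
move=> x; apply: ler_of_sqr_le_scale; [exact: (qform_ge0 ipA_ge0) | exact: ltW |].
rewrite -[qform ipA (S x)]/(Re (ipA (S x) (S x))) -B_S.
apply: (form_sqr_le_of_iter_bound ipA_sesq ipA_ge0 B_lin B_sym B_ge0
  (C := M * qform ip x) K_gt0).
move=> k; apply: (le_trans (AM _)); rewrite mulrCA ler_wpM2l ?(ltW M_gt0) //.
exact: qform_iter_le (ltW K_gt0) BK k x.
Qed.

Lemma Ssharp_Abounded : form_bounded ipA Ssharp.
Proof.
have [L L_gt0 SL] := S_Abounded; exists L => // x.
have := cauchy_schwarz_Re ipA_sesq ipA_ge0 x (S (Ssharp x)).
rewrite -ipA_Ssharp_S (formC ipA_sesq ipA_ge0) ReJ.
have := SL (Ssharp x); have := qform_ge0 ipA_ge0 x.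
have := qform_ge0 ipA_ge0 (Ssharp x).
rewrite /qform; set u := Re (ipA (Ssharp x) (Ssharp x)); set t := Re (ipA x x).
set q := Re (ipA _ _) => u_ge0 t_ge0 qLu uu.
have : u ^+ 2 <= u * (L * t).
  apply: (le_trans uu); rewrite (_ : u * (L * t) = t * (L * u)); last by ring.
  exact: ler_wpM2l.
have [-> _|u_neq0] := eqVneq u 0; first by rewrite mulr_ge0 // ltW.
by rewrite expr2 ler_pM2l // lt_def u_neq0.
Qed.

Local Notation P := (Ssharp \o S).
Local Notation Q := (S \o Ssharp).

Lemma P_linear : linear P. Proof. exact: linear_comp Ssharp_linear S_linear. Qed.
Lemma Q_linear : linear Q. Proof. exact: linear_comp S_linear Ssharp_linear. Qed.

Lemma ipA_P u v : ipA (P u) v = ipA (S u) (S v). Proof. exact: ipA_Ssharp_S. Qed.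
Lemma ipA_Q u v : ipA (Q u) v = ipA (Ssharp u) (Ssharp v).
Proof. exact: ipA_S_Ssharp. Qed.

Lemma P_sym u v : ipA (P u) v = ipA u (P v).
Proof. by rewrite ipA_P ipA_S_Ssharp. Qed.
Lemma Q_sym u v : ipA (Q u) v = ipA u (Q v).
Proof. by rewrite ipA_Q ipA_Ssharp_S. Qed.

Lemma P_ge0 u : 0 <= Re (ipA (P u) u).
Proof. by rewrite ipA_P; apply: (qform_ge0 ipA_ge0). Qed.
Lemma Q_ge0 u : 0 <= Re (ipA (Q u) u).
Proof. by rewrite ipA_Q; apply: (qform_ge0 ipA_ge0). Qed.

Lemma domegaA_pointwise_le z n : normA ip A z = 1 ->
  Num.sqrt (Normc.normc (ip (A (S z)) z) ^+ 2 + normA ip A (S z) ^+ 4) ^+ (4 * n.+1)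
  <= 4%:R ^+ n * (opnormA ip A (opadd (opexp P n.+1) (opexp P (2 * n.+1)))
                 * opnormA ip A (opadd (opexp Q n.+1) (opexp P (2 * n.+1)))).
Proof.
move=> z1; have z_unit := qformA_unit z1.
set a := qform ipA (S z); set b := qform ipA (Ssharp z).
have sqrt4 (y : R) : 0 <= y -> Num.sqrt y ^+ 4 = y ^+ 2.
  by move=> y_ge0; rewrite (exprM _ 2 2) sqr_sqrtr.
rewrite exprM [normA ip A (S z) ^+ 4]sqrt4 ?(qform_ge0 ipA_ge0) //.
rewrite sqrt4 ?addr_ge0 ?sqr_ge0 //.
have holderP j : a ^+ j.+1 <= Re (ipA (iter j.+1 P z) z).
  have := holder_mccarthy ipA_sesq ipA_ge0 P_linear P_sym P_ge0 z j.
  by rewrite ipA_P z_unit expr1n mul1r.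
have holderQ j : b ^+ j.+1 <= Re (ipA (iter j.+1 Q z) z).
  have := holder_mccarthy ipA_sesq ipA_ge0 Q_linear Q_sym Q_ge0 z j.
  by rewrite ipA_Q z_unit expr1n mul1r.
have holderP2 : a ^+ (2 * n.+1) <= Re (ipA (iter (2 * n.+1) P z) z).
  by rewrite mulnS add2n; apply: holderP.
have P_bnd k : form_bounded ipA (opexp P k).
  exact/form_bounded_iter/form_bounded_comp/S_Abounded/Ssharp_Abounded.
have Q_bnd k : form_bounded ipA (opexp Q k).
  exact/form_bounded_iter/form_bounded_comp/Ssharp_Abounded/S_Abounded.
apply: (domega_scalar_ineq (b := b)).
- exact: sqr_ge0.
- by have := cauchy_schwarz ipA_sesq ipA_ge0 (S z) z; rewrite z_unit mulr1.
- have := cauchy_schwarz ipA_sesq ipA_ge0 z (Ssharp z).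
  by rewrite z_unit mul1r -ipA_S_Ssharp.
- apply: le_trans (Re_ipA_add_le_opnormA (P_bnd _) (P_bnd _) z1).
  exact: lerD (holderP n) holderP2.
- apply: le_trans (Re_ipA_add_le_opnormA (Q_bnd _) (P_bnd _) z1).
  exact: lerD (holderQ n) holderP2.
Qed.

End ASeminorm.

Theorem theorem2p25 (R : realType) (H : lmodType R[i]) (ip : H -> H -> R[i])
    (A S Sstar Ssharp : H -> H) :
  is_hilbert ip ->
  positive_op ip A ->
  is_adjoint ip S Sstar ->
  in_BA ip A S Sstar ->
  is_Asharp ip A Sstar Ssharp ->
  forall n : nat, (0 < n)%N ->
    domegaA ip A S ^+ (4 * n) <=
    4%:R ^+ (n - 1) *
      opnormA ip A (opadd (opexp (Ssharp \o S) n) (opexp (Ssharp \o S) (2 * n))) *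
      opnormA ip A (opadd (opexp (S \o Ssharp) n) (opexp (Ssharp \o S) (2 * n))).
Proof.
move=> [ip_ax _] A_pos S_adj S_BA S_sharp [//|n] _.
rewrite subn1 /= -mulrA; apply: sup_exprn_le.
- by rewrite muln_gt0.
- by rewrite !mulr_ge0 ?exprn_ge0 ?opnormA_ge0.
move=> _ [z [z1 ->]]; split; first exact: sqrtr_ge0.
exact: domegaA_pointwise_le.
Qed.
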